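(* Let $M$ be a finite set of alternatives, $\mathcal{R}$ the set of weak preference orders on $M$, and $\varphi:\mathcal{R}\to\Delta(M)$ a mechanism. If $\varphi$ is separation monotonic, separation upper invariant, and separation lower invariant, then it is multi-separation strategyproof, i.e., for every multi-separation $(R,R')$, $\varphi(R)$ first order-stochastically dominates $\varphi(R')$ at $R$, and $\varphi(R')$ first order-stochastically dominates $\varphi(R)$ at $R'$.
   Context: A preference order is a complete, transitive relation $R$ on $M$; $a\,I\,b$ means $a\,R\,b$ and $b\,R\,a$; $a\,P\,b$ means $a\,R\,b$ and not $b\,R\,a$. Write $R$ as $M_1\,P\,\cdots\,P\,M_K$ where $(M_k)$ are the nonempty indifference classes ordered so that $a\,P\,b$ for $a\in M_k$, $b\in M_{k'}$, $k<k'$. For $A\subseteq M$, $\varphi_A(R)=\sum_{a\in A}(\varphi(R))_a$. A lottery $x$ first order-stochastically dominates $y$ at $R$ if $\sum_{j: j R a}x_j\ge\sum_{j: j R a}y_j$ for all $a\in M$. A multi-separation is a pair $(R,R')$ such that, with $R=M_1\,P\,\cdots\,P\,M_K$, there are integers $L_1,\dots,L_K\ge1$ and, for each $k$, a partition of $M_k$ into pairwise disjoint nonempty sets $M_k^1,\dots,M_k^{L_k}$ with $R'=M_1^1\,P'\,\cdots\,P'\,M_1^{L_1}\,P'\,M_2^1\,P'\,\cdots\,P'\,M_K^1\,P'\,\cdots\,P'\,M_K^{L_K}$ (indifference within each listed set). A separation is a pair $(R,R')$ such that there are $\kappa\in\{1,\dots,K\}$ and a partition of $M_\kappa$ into disjoint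 nonempty $M_\kappa^1,M_\kappa^2$ with $R'=M_1\,P'\,\cdots\,P'\,M_{\kappa-1}\,P'\,M_\kappa^1\,P'\,M_\kappa^2\,P'\,M_{\kappa+1}\,P'\,\cdots\,P'\,M_K$. Axioms, for every separation $(R,R')$: separation responsive: $\varphi_{M_\kappa^1}(R')\ge\varphi_{M_\kappa^1}(R)$ and $\varphi_{M_\kappa^2}(R')\le\varphi_{M_\kappa^2}(R)$; separation direct: if $\varphi_{M_k}(R)\ne\varphi_{M_k}(R')$ for some $k\in\{1,\dots,K\}$ then $\varphi_{M_\kappa^1}(R')\ne\varphi_{M_\kappa^1}(R)$ and $\varphi_{M_\kappa^2}(R')\ne\varphi_{M_\kappa^2}(R)$; separation monotonic: responsive and direct; separation upper invariant: $\varphi_{M_k}(R)=\varphi_{M_k}(R')$ for $k<\kappa$; separation lower invariant: $\varphi_{M_k}(R)=\varphi_{M_k}(R')$ for $k>\kappa$. *)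

From mathcomp Require Import all_boot all_order all_algebra.
Set Implicit Arguments. Unset Strict Implicit. Unset Printing Implicit Defensive.
Import Order.TTheory GRing.Theory Num.Theory.
Local Open Scope ring_scope.

Section Defs.
Variable (F : realFieldType) (M : finType).

Definition complete_rel (P : rel M) : Prop := forall a b, P a b || P b a.
Definition pref_order (P : rel M) : Prop := complete_rel P /\ transitive P.

Definition seq_partition (S : {set M}) (Ls : seq {set M}) : Prop :=
  [/\ (forall i, (i < size Ls)%N -> nth set0 Ls i != set0),
      (forall i j, (i < size Ls)%N -> (j < size Ls)%N -> i != j ->
          [disjoint nth set0 Ls i & nth set0 Ls j])
    & \bigcup_(X <- Ls) X = S].

(* P = Ms_0 P Ms_1 P ... P Ms_(K-1): Ms lists the indifference classes of P,
   from best to worst (indices start at 0). *)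
Definition ordered_classes (P : rel M) (Ms : seq {set M}) : Prop :=
  seq_partition setT Ms /\
  forall i j a b, (i < size Ms)%N -> (j < size Ms)%N ->
    a \in nth set0 Ms i -> b \in nth set0 Ms j -> P a b = (i <= j)%N.

(* (P, P') is a separation, with P = Ms_0 P ... P Ms_(K-1), splitting the
   class Ms_k into M1, M2, with P' = ... Ms_(k-1) P' M1 P' M2 P' Ms_(k+1) ... *)
Definition separation (P P' : rel M) (Ms : seq {set M}) (k : nat)
    (M1 M2 : {set M}) : Prop :=
  [/\ ordered_classes P Ms, (k < size Ms)%N,
      seq_partition (nth set0 Ms k) [:: M1; M2]
    & ordered_classes P' (take k Ms ++ M1 :: M2 :: drop k.+1 Ms)].

Definition multi_separation (P P' : rel M) : Prop :=
  exists (Ms : seq {set M}) (Ls : seq (seq {set M})),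
    [/\ ordered_classes P Ms, size Ls = size Ms,
        (forall k, (k < size Ms)%N -> seq_partition (nth set0 Ms k) (nth [::] Ls k))
      & ordered_classes P' (flatten Ls)].

Definition lottery (x : M -> F) : Prop :=
  (forall a, 0 <= x a) /\ \sum_(a : M) x a = 1.

Definition mechanism (phi : rel M -> M -> F) : Prop :=
  forall P, pref_order P -> lottery (phi P).

Definition phiA (phi : rel M -> M -> F) (P : rel M) (A : {set M}) : F :=
  \sum_(a in A) phi P a.

Definition separation_responsive (phi : rel M -> M -> F) : Prop :=
  forall P P' Ms k M1 M2, separation P P' Ms k M1 M2 ->
    phiA phi P M1 <= phiA phi P' M1 /\ phiA phi P' M2 <= phiA phi P M2.

Definition separation_direct (phi : rel M -> M -> F) : Prop :=
  forall P P' Ms k M1 M2, separation P P' Ms k M1 M2 ->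
    (exists2 k', (k' < size Ms)%N &
        phiA phi P (nth set0 Ms k') != phiA phi P' (nth set0 Ms k')) ->
    phiA phi P' M1 != phiA phi P M1 /\ phiA phi P' M2 != phiA phi P M2.

Definition separation_monotonic (phi : rel M -> M -> F) : Prop :=
  separation_responsive phi /\ separation_direct phi.

Definition separation_upper_invariant (phi : rel M -> M -> F) : Prop :=
  forall P P' Ms k M1 M2, separation P P' Ms k M1 M2 ->
    forall k', (k' < k)%N ->
      phiA phi P (nth set0 Ms k') = phiA phi P' (nth set0 Ms k').

Definition separation_lower_invariant (phi : rel M -> M -> F) : Prop :=
  forall P P' Ms k M1 M2, separation P P' Ms k M1 M2 ->
    forall k', (k < k')%N -> (k' < size Ms)%N ->
      phiA phi P (nth set0 Ms k') = phiA phi P' (nth set0 Ms k').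

Definition fosd (P : rel M) (x y : M -> F) : Prop :=
  forall a, \sum_(j | P j a) y j <= \sum_(j | P j a) x j.

Definition multi_separation_strategyproof (phi : rel M -> M -> F) : Prop :=
  forall P P', multi_separation P P' ->
    fosd P (phi P) (phi P') /\ fosd P' (phi P') (phi P).

End Defs.

(* Splitting one class of a weak order into two consecutive classes is a
   separation, and a multi-separation (R, R') is reached from R by a chain of such
   splits.  Along a separation, upper and lower invariance fix the mass of every
   class other than the split one, and since the total mass is 1 they fix it for
   the split class too.  Hence phi(R) and phi(R') give the same mass to every class
   of R, so to every upper contour set of R.  An upper contour set of R' is the union
   of the classes of R above some class C together with an initial segment C1 of
   the refinement of C: splitting C into C1 and C \ C1 first, responsiveness can
   only increase the mass of this set, and the remaining splits leave it fixed. *)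

From mathcomp Require Import all_boot all_order all_algebra.
From Stdlib Require Import FunctionalExtensionality.
Set Implicit Arguments. Unset Strict Implicit. Unset Printing Implicit Defensive.
Import Order.TTheory GRing.Theory Num.Theory.

Section OrderedPartitions.
Variable M : finType.
Implicit Types (s t A B L : seq {set M}) (C S X Z : {set M}).

Definition unions s : {set M} := \bigcup_(X <- s) X.

Lemma unions_cons X s : unions (X :: s) = X :|: unions s.
Proof. exact: big_cons. Qed.

Lemma unions_cat s t : unions (s ++ t) = unions s :|: unions t.
Proof. exact: big_cat. Qed.

Lemma unions_rcons s X : unions (rcons s X) = unions s :|: X.
Proof. by rewrite -cats1 unions_cat unions_cons /unions big_nil setU0. Qed.

Lemma unions_seq1 X : unions [:: X] = X.
Proof. by rewrite unions_cons /unions big_nil setU0. Qed.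

Lemma in_unions a s : (a \in unions s) = has (fun X => a \in X) s.
Proof. by elim: s => [|X s IH]; rewrite ?unions_cons ?inE ?IH // /unions big_nil inE. Qed.

Lemma seq_partitionE S s : seq_partition S s <->
  [/\ all (fun X => X != set0) s,
      pairwise (fun X Y => [disjoint X & Y]) s & unions s = S].
Proof.
split=> [[s_n0 s_disj s_cov]|[/(all_nthP set0) s_n0 /(pairwiseP set0) s_disj s_cov]].
  split=> //; first exact/(all_nthP set0).
  by apply/(pairwiseP set0) => i j ? ? ij; rewrite s_disj // ltn_eqF.
split=> // i j ? ?; rewrite neq_ltn => /orP[ij|ji]; first exact: s_disj.
by rewrite disjoint_sym; apply: s_disj.
Qed.

Lemma seq_partition_nth S s a : seq_partition S s -> a \in S ->
  exists2 i, i < size s & a \in nth set0 s i.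
Proof.
by case=> _ _ s_cov; rewrite -[S]s_cov => /[!in_unions] /(has_nthP set0).
Qed.

Lemma seq_partition_index S s i j a : seq_partition S s ->
  i < size s -> j < size s -> a \in nth set0 s i -> a \in nth set0 s j -> i = j.
Proof.
case=> _ s_disj _ i_lt j_lt ai aj; apply/eqP; apply: contraT => ij.
by rewrite (disjointFr (s_disj i j i_lt j_lt ij) ai) in aj.
Qed.

Lemma seq_partition_mem S s a : seq_partition S s -> a \in S ->
  exists A C B, s = A ++ C :: B /\ a \in C.
Proof.
move=> s_part /(seq_partition_nth s_part) [i i_lt ai].
by exists (take i s), (nth set0 s i), (drop i.+1 s); rewrite -drop_nth ?cat_take_drop.
Qed.

Lemma seq_partition_refine S A C B L :
  seq_partition S (A ++ C :: B) -> seq_partition C L -> seq_partition S (A ++ L ++ B).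
Proof.
move=> /seq_partitionE[s_n0 s_disj s_cov] /seq_partitionE[L_n0 L_disj L_cov].
have L_sub Y : Y \in L -> Y \subset C.
  by move=> YL; rewrite -L_cov /unions bigcup_seq (bigcup_sup _ YL).
move: s_n0 s_disj; rewrite !all_cat /= pairwise_cat pairwise_cons.
case/and3P=> A_n0 _ B_n0 /and4P[/allrelP A_CB A_disj /allP C_B B_disj].
apply/seq_partitionE; split.
- by rewrite !all_cat A_n0 L_n0 B_n0.
- rewrite !pairwise_cat A_disj L_disj B_disj !andbT; apply/andP; split.
    apply/allrelP => X Y XA; rewrite mem_cat => /orP[YL|YB].
      by apply: disjointWr (L_sub _ YL) _; apply: A_CB; rewrite ?mem_head.
    by apply: A_CB; rewrite // inE YB orbT.
  by apply/allrelP => X Y /L_sub XC YB; apply: disjointWl XC (C_B _ YB).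
- by rewrite -s_cov !unions_cat unions_cons L_cov.
Qed.

Lemma seq_partition_cat C s t : seq_partition C (s ++ t) -> s != [::] -> t != [::] ->
  [/\ seq_partition C [:: unions s; unions t],
      seq_partition (unions s) s & seq_partition (unions t) t].
Proof.
move=> /seq_partitionE[]; rewrite all_cat pairwise_cat.
case/andP=> s_n0 t_n0 /and3P[/allrelP st_disj s_disj t_disj] st_cov s_nil t_nil.
have unions_n0 u : u != [::] -> all (fun X => X != set0) u -> unions u != set0.
  by case: u => // X u _ /andP[X_n0 _]; rewrite unions_cons setU_eq0 negb_and X_n0.
split; apply/seq_partitionE; split=> //=.
- by rewrite !unions_n0.
- rewrite !andbT /unions !bigcup_seq /=; apply: bigcup_disjoint => Y Yt.
  rewrite disjoint_sym; apply: bigcup_disjoint => X Xs.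
  by rewrite disjoint_sym; apply: st_disj.
- by rewrite !unions_cons /unions big_nil setU0 -unions_cat.
Qed.

Definition class_index s a := find (fun X => a \in X) s.

Definition classes_rel s : rel M := fun a b => class_index s a <= class_index s b.

Lemma class_index_nth S s i a : seq_partition S s -> i < size s ->
  a \in nth set0 s i -> class_index s a = i.
Proof.
move=> s_part i_lt ai.
have a_has : has (fun X => a \in X) s by apply/(has_nthP set0); exists i.
apply: seq_partition_index s_part _ i_lt (nth_find set0 a_has) ai.
by rewrite -has_find.
Qed.

Lemma pref_order_classes_rel s : pref_order (classes_rel s).
Proof. by split=> [a b|b a c]; [apply: leq_total | apply: leq_trans]. Qed.

Lemma ordered_classes_rel s : seq_partition setT s -> ordered_classes (classes_rel s) s.
Proof.
move=> s_part; split=> // i j a b i_lt j_lt ai bj.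
by rewrite /classes_rel (class_index_nth s_part i_lt ai) (class_index_nth s_part j_lt bj).
Qed.

Lemma ordered_classesE (P : rel M) s : ordered_classes P s -> P = classes_rel s.
Proof.
case=> s_part P_cl; apply: functional_extensionality => a.
apply: functional_extensionality => b.
have [i i_lt ai] := seq_partition_nth s_part (in_setT a).
have [j j_lt bj] := seq_partition_nth s_part (in_setT b).
rewrite (P_cl i j) // /classes_rel.
by rewrite (class_index_nth s_part i_lt ai) (class_index_nth s_part j_lt bj).
Qed.

Lemma ordered_classes_pref_order (P : rel M) s : ordered_classes P s -> pref_order P.
Proof. by move/ordered_classesE ->; apply: pref_order_classes_rel. Qed.

Lemma classes_rel_upper A C B a j : seq_partition setT (A ++ C :: B) -> a \in C ->
  classes_rel (A ++ C :: B) j a = (j \in unions (rcons A C)).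
Proof.
move=> s_part aC; rewrite /classes_rel.
have a_idx : class_index (A ++ C :: B) a = size A.
  apply: class_index_nth s_part _ _; last by rewrite nth_cat ltnn subnn.
  by rewrite size_cat addnS ltnS leq_addr.
have j_has : has (fun X => j \in X) (A ++ C :: B).
  by case: s_part => _ _ s_cov; rewrite -in_unions /unions s_cov inE.
have -> : rcons A C = take (size A).+1 (A ++ C :: B).
  by rewrite take_cat ltnNge leqnSn /= subSnn /= take0 cats1.
by rewrite a_idx in_unions (has_take _ j_has) ltnS.
Qed.

Lemma separation_split A C B X Z :
  seq_partition setT (A ++ C :: B) -> seq_partition C [:: X; Z] ->
  separation (classes_rel (A ++ C :: B)) (classes_rel (A ++ X :: Z :: B))
    (A ++ C :: B) (size A) X Z.
Proof.
move=> s_part C_part; split.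
- exact: ordered_classes_rel.
- by rewrite size_cat /= addnS ltnS leq_addr.
- by rewrite nth_cat ltnn subnn.
- rewrite take_size_cat // drop_cat ltnNge leqnSn /= subSnn /= drop0.
  exact/ordered_classes_rel/(seq_partition_refine s_part C_part).
Qed.

Inductive splits : seq {set M} -> seq {set M} -> Prop :=
  | splits_refl s : splits s s
  | splits_step A C B X Z t : seq_partition C [:: X; Z] ->
      splits (A ++ X :: Z :: B) t -> splits (A ++ C :: B) t.

Lemma splits_trans s t u : splits s t -> splits t u -> splits s u.
Proof. by elim=> // A C B X Z t' C_part _ IH /IH; apply: splits_step. Qed.

Lemma splits_catl u s t : splits s t -> splits (u ++ s) (u ++ t).
Proof.
elim=> [s'|A C B X Z t' C_part _ IH]; first exact: splits_refl.
by rewrite catA; apply: splits_step C_part _; rewrite -catA.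
Qed.

Lemma splits_catr u s t : splits s t -> splits (s ++ u) (t ++ u).
Proof.
elim=> [s'|A C B X Z t' C_part _ IH]; first exact: splits_refl.
by rewrite -catA /=; apply: splits_step C_part _; rewrite -catA in IH.
Qed.

Lemma splits_cat s s' t t' : splits s s' -> splits t t' -> splits (s ++ t) (s' ++ t').
Proof. by move=> /(splits_catr t) ss' /(splits_catl s') tt'; apply: splits_trans ss' tt'. Qed.

Lemma splits_partition C L : C != set0 -> seq_partition C L -> splits [:: C] L.
Proof.
elim: L C => [|X [|Y L] IH] C C_n0 C_part; have [_ _ C_cov] := C_part.
- by move: C_n0; rewrite -C_cov big_nil eqxx.
- by rewrite -C_cov -/(unions _) unions_seq1; apply: splits_refl.
have [XY_part _ YL_part] := seq_partition_cat (s := [:: X]) C_part isT isT.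
rewrite unions_seq1 in XY_part.
have /seq_partitionE[/and3P[_ YL_n0 _] _ _] := XY_part.
apply: (splits_step (A := [::]) (B := [::]) XY_part).
exact/(splits_catl [:: X])/IH.
Qed.

Lemma seq_partition_splits S s t : splits s t -> seq_partition S s -> seq_partition S t.
Proof.
by elim=> // A C B X Z u C_part _ IH s_part; apply: IH (seq_partition_refine s_part C_part).
Qed.

Definition blockwise_partition s (Ls : seq (seq {set M})) : Prop :=
  size Ls = size s /\
  forall k, k < size s -> seq_partition (nth set0 s k) (nth [::] Ls k).

Lemma blockwise_partition_cons C s L Ls :
  blockwise_partition (C :: s) (L :: Ls) <->
  seq_partition C L /\ blockwise_partition s Ls.
Proof.
split=> [[[size_eq] parts]|[C_part [size_eq parts]]].
  by split; [apply: (parts 0) | split=> // k; apply: (parts k.+1)].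
by split=> [|[|k]] /=; rewrite ?size_eq //; apply: parts.
Qed.

Lemma blockwise_partition_cat A C B Ls : blockwise_partition (A ++ C :: B) Ls ->
  exists LA L LB, [/\ Ls = LA ++ L :: LB, blockwise_partition A LA,
                      seq_partition C L & blockwise_partition B LB].
Proof.
elim: A Ls => [|X A IH] [|L Ls] //=; try by case.
  by case/blockwise_partition_cons=> C_part B_part; exists [::], L, Ls.
case/blockwise_partition_cons=> X_part /IH[LA [L' [LB [-> A_part C_part B_part]]]].
by exists (L :: LA), L', LB; split=> //; apply/blockwise_partition_cons.
Qed.

Lemma splits_flatten s Ls : all (fun X => X != set0) s ->
  blockwise_partition s Ls -> splits s (flatten Ls).
Proof.
elim: s Ls => [|C s IH] [|L Ls] //=; try by [move=> _ []|move=> _ _; apply: splits_refl].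
case/andP=> C_n0 s_n0 /blockwise_partition_cons[C_part s_part].
by rewrite -cat1s; apply: splits_cat (splits_partition C_n0 C_part) (IH _ s_n0 s_part).
Qed.

Lemma unions_flatten s Ls : blockwise_partition s Ls -> unions (flatten Ls) = unions s.
Proof.
elim: s Ls => [|C s IH] [|L Ls] //=; try by case.
case/blockwise_partition_cons=> [[_ _ C_cov] /IH s_cov].
by rewrite unions_cat s_cov unions_cons -C_cov.
Qed.

End OrderedPartitions.

Section Mechanism.
Variables (F : realFieldType) (M : finType) (phi : rel M -> M -> F).
Local Open Scope ring_scope.
Implicit Types (P Q : rel M) (s t A B : seq {set M}) (C D X Z : {set M}).

Lemma phiA_setU P X Z : [disjoint X & Z] ->
  phiA phi P (X :|: Z) = phiA phi P X + phiA phi P Z.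
Proof. by move=> XZ; rewrite /phiA -bigU //; apply: eq_bigl => a; rewrite !inE. Qed.

Lemma phiA_unions P s : pairwise (fun X Y => [disjoint X & Y]) s ->
  phiA phi P (unions s) = \sum_(X <- s) phiA phi P X.
Proof.
elim: s => [|X s IH]; first by rewrite /unions !big_nil /phiA big_set0.
rewrite pairwise_cons => /andP[/allP X_s s_disj]; rewrite unions_cons big_cons phiA_setU ?IH //.
by rewrite /unions bigcup_seq; apply: bigcup_disjoint.
Qed.

Lemma phiA_unions_eq P Q s : pairwise (fun X Y => [disjoint X & Y]) s ->
  {in s, forall C, phiA phi P C = phiA phi Q C} ->
  phiA phi P (unions s) = phiA phi Q (unions s).
Proof. by move=> s_disj PQ; rewrite !phiA_unions //; apply: eq_big_seq. Qed.

Hypothesis phi_mech : mechanism phi.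

Lemma phiA_partition_sum P s : pref_order P -> seq_partition setT s ->
  \sum_(i < size s) phiA phi P (nth set0 s i) = 1.
Proof.
move=> P_pref /seq_partitionE[_ s_disj s_cov].
rewrite -(big_mkord xpredT (fun i => phiA phi P (nth set0 s i))).
rewrite -(big_nth set0 xpredT (phiA phi P)).
rewrite -phiA_unions // s_cov -(phi_mech P_pref).2 /phiA.
by apply: eq_bigl => a; rewrite inE.
Qed.

Hypotheses (phi_resp : separation_responsive phi)
  (phi_up : separation_upper_invariant phi) (phi_low : separation_lower_invariant phi).

Lemma separation_classes_eq P P' s k X Z : separation P P' s k X Z ->
  {in s, forall C, phiA phi P C = phiA phi P' C}.
Proof.
move=> sep _ /(nthP set0)[i i_lt <-]; have [Ps k_lt _ P's] := sep.
have class_eq j : (j < size s)%N -> j != k ->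
    phiA phi P (nth set0 s j) = phiA phi P' (nth set0 s j).
  by move=> j_lt; rewrite neq_ltn => /orP[jk|kj];
    [apply: phi_up sep _ jk | apply: phi_low sep _ kj j_lt].
have [-> {i i_lt}|] := eqVneq i k; last exact: class_eq.
have s_part : seq_partition setT s := Ps.1.
have /eqP := phiA_partition_sum (ordered_classes_pref_order Ps) s_part.
rewrite -(phiA_partition_sum (ordered_classes_pref_order P's) s_part).
rewrite (bigD1 (Ordinal k_lt)) // [X in _ == X](bigD1 (Ordinal k_lt)) //=.
rewrite (eq_bigr (fun j : 'I_(size s) => phiA phi P' (nth set0 s j))) => [|j jk].
  by move=> /eqP /addIr.
by apply: class_eq (ltn_ord j) _; rewrite -(inj_eq val_inj) in jk.
Qed.

Lemma separation_upper_le P P' s k X Z : separation P P' s k X Z ->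
  phiA phi P (unions (take k s) :|: X) <= phiA phi P' (unions (take k s) :|: X).
Proof.
move=> sep; have [[s_part _] k_lt XZ_part _] := sep.
have /seq_partitionE[_ + _] := s_part.
rewrite -{1}(cat_take_drop k s) (drop_nth set0 k_lt) pairwise_cat.
case/and3P=> /allrelP pre_disj pre_pw _.
have X_sub : X \subset nth set0 s k.
  by case: XZ_part => _ _ <-; rewrite -/(unions _) unions_cons subsetUl.
have pre_X : [disjoint unions (take k s) & X].
  rewrite disjoint_sym (disjointWl X_sub) // /unions bigcup_seq.
  by apply: bigcup_disjoint => Y Y_pre; rewrite disjoint_sym pre_disj ?mem_head.
rewrite !phiA_setU // (phiA_unions_eq (Q := P') pre_pw) ?lerD2l.
  exact: (phi_resp sep).1.
by move=> C /mem_take C_s; apply: (separation_classes_eq sep C_s).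
Qed.

Lemma splits_classes_eq s t : splits s t -> seq_partition setT s ->
  {in s, forall C, phiA phi (classes_rel s) C = phiA phi (classes_rel t) C}.
Proof.
elim=> [//|A C B X Z u C_part _ IH s_part D D_in].
have IH' := IH (seq_partition_refine s_part C_part).
rewrite (separation_classes_eq (separation_split s_part C_part) D_in).
have [D_in'|D_notin] := boolP (D \in A ++ X :: Z :: B); first exact: IH'.
have {D_in D_notin} -> : D = C.
  move: D_in D_notin; rewrite !mem_cat !in_cons.
  by case/or3P=> [D_A|/eqP //|D_B]; rewrite ?D_A ?D_B ?orbT.
have /seq_partitionE[_ /andP[/andP[XZ _] _] <-] := C_part.
by rewrite unions_cons unions_seq1 !phiA_setU // !IH' //; rewrite mem_cat !inE eqxx !orbT.
Qed.

Lemma splits_upper_eq A C B t : seq_partition setT (A ++ C :: B) ->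
  splits (A ++ C :: B) t ->
  phiA phi (classes_rel (A ++ C :: B)) (unions (rcons A C)) =
  phiA phi (classes_rel t) (unions (rcons A C)).
Proof.
rewrite -cat_rcons => s_part s_t; have /seq_partitionE[_ s_disj _] := s_part.
move: s_disj; rewrite pairwise_cat => /and3P[_ AC_disj _].
apply: phiA_unions_eq => // D D_AC.
by apply: splits_classes_eq; rewrite // mem_cat D_AC.
Qed.

Lemma split_upper_le A C B X Z t :
  seq_partition setT (A ++ C :: B) -> seq_partition C [:: X; Z] ->
  splits (A ++ X :: Z :: B) t ->
  phiA phi (classes_rel (A ++ C :: B)) (unions (rcons A X))
    <= phiA phi (classes_rel t) (unions (rcons A X)).
Proof.
move=> s_part C_part s_t.
have := separation_upper_le (separation_split s_part C_part).
rewrite take_size_cat // -unions_rcons => /le_trans; apply.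
by rewrite (splits_upper_eq (seq_partition_refine s_part C_part) s_t).
Qed.

Lemma fosd_splits s t : seq_partition setT s -> splits s t ->
  fosd (classes_rel s) (phi (classes_rel s)) (phi (classes_rel t)).
Proof.
move=> s_part s_t a.
have [A [C [B [s_eq aC]]]] := seq_partition_mem s_part (in_setT a); subst s.
under eq_bigl => j do rewrite (classes_rel_upper _ s_part aC).
under [X in _ <= X]eq_bigl => j do rewrite (classes_rel_upper _ s_part aC).
by have := splits_upper_eq s_part s_t; rewrite /phiA => ->.
Qed.

Lemma blockwise_upper_le A C B LA L1 L2 LB :
  seq_partition setT (A ++ C :: B) -> blockwise_partition A LA ->
  seq_partition C (L1 ++ L2) -> blockwise_partition B LB -> L1 != [::] ->
  phiA phi (classes_rel (A ++ C :: B)) (unions (rcons A (unions L1)))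
    <= phiA phi (classes_rel (flatten (LA ++ (L1 ++ L2) :: LB)))
         (unions (rcons A (unions L1))).
Proof.
move=> s_part A_LA C_L B_LB L1_nil; have /seq_partitionE[+ _ _] := s_part.
rewrite all_cat => /and3P[A_n0 C_n0 B_n0].
have A_t := splits_flatten A_n0 A_LA; have B_t := splits_flatten B_n0 B_LB.
rewrite flatten_cat /=; case: L2 => [|Y L2] in C_L *.
  rewrite cats0 in C_L *; have [_ _ C_cov] := C_L; rewrite -/(unions L1) in C_cov.
  have s_t : splits (A ++ C :: B) (flatten LA ++ L1 ++ flatten LB).
    apply: (splits_cat A_t); rewrite -cat1s.
    exact: splits_cat (splits_partition C_n0 C_L) B_t.
  by rewrite C_cov (splits_upper_eq s_part s_t).
have [C_part L1_part L2_part] := seq_partition_cat C_L L1_nil isT.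
have /seq_partitionE[/and3P[L1_n0 L2_n0 _] _ _] := C_part.
apply: split_upper_le s_part C_part _; apply: (splits_cat A_t).
rewrite -catA -cat1s; apply: (splits_cat (splits_partition L1_n0 L1_part)).
by rewrite -cat1s; apply: splits_cat (splits_partition L2_n0 L2_part) B_t.
Qed.

Lemma fosd_blockwise s Ls : seq_partition setT s -> blockwise_partition s Ls ->
  fosd (classes_rel (flatten Ls)) (phi (classes_rel (flatten Ls))) (phi (classes_rel s)).
Proof.
move=> s_part s_Ls a; have /seq_partitionE[s_n0 _ _] := s_part.
have t_part := seq_partition_splits (splits_flatten s_n0 s_Ls) s_part.
have [A [C [B [s_eq aC]]]] := seq_partition_mem s_part (in_setT a); subst s.
have [LA [L [LB [Ls_eq A_LA C_L B_LB]]]] := blockwise_partition_cat s_Ls; subst Ls.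
have [L1 [X [L2 [L_eq aX]]]] := seq_partition_mem C_L aC; subst L.
have t_eq : flatten (LA ++ (L1 ++ X :: L2) :: LB) =
            (flatten LA ++ L1) ++ X :: (L2 ++ flatten LB).
  by rewrite flatten_cat /= -!catA.
rewrite t_eq in t_part *.
under eq_bigl => j do rewrite (classes_rel_upper _ t_part aX).
under [X in _ <= X]eq_bigl => j do rewrite (classes_rel_upper _ t_part aX).
rewrite -t_eq unions_rcons unions_cat (unions_flatten A_LA) -setUA -!unions_rcons.
rewrite -cat_rcons in C_L *; apply: blockwise_upper_le => //.
by rewrite -size_eq0 size_rcons.
Qed.

End Mechanism.

Theorem lemma6 (F : realFieldType) (M : finType) (phi : rel M -> M -> F) :
  mechanism phi ->
  separation_monotonic phi ->
  separation_upper_invariant phi ->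
  separation_lower_invariant phi ->
  multi_separation_strategyproof phi.
Proof.
move=> phi_mech [phi_resp _] phi_up phi_low P P' [s [Ls [Ps size_Ls s_Ls P'Ls]]].
have s_part : seq_partition setT s := Ps.1.
have s_blocks : blockwise_partition s Ls by [].
have /seq_partitionE[s_n0 _ _] := s_part.
rewrite (ordered_classesE Ps) (ordered_classesE P'Ls); split.
  exact: fosd_splits (splits_flatten s_n0 s_blocks).
exact: fosd_blockwise s_part s_blocks.
Qed.
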